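(* Let $(M,\phi,\xi,\eta,g)$ be a (connected) almost contact metric manifold with a $\phi$-invariant distribution $\mathcal{V}$, and let $\mathcal{H}=\mathcal{V}^\perp$. Then $\xi\in\Gamma(\mathcal{V})$ or $\xi\in\Gamma(\mathcal{H})$. Moreover, if $\xi\in\Gamma(\mathcal{V})$, then $\mathcal{H}\subseteq\mathcal{D}=\ker\eta$.
   Context: Almost contact metric structure: $(\phi,\xi,\eta,g)$ with $\phi$ a $(1,1)$-tensor, $\xi$ a vector field, $\eta$ a 1-form, $g$ Riemannian, $\phi^2=-I+\eta\otimes\xi$, $\eta(\xi)=1$, $g(\phi X,\phi Y)=g(X,Y)-\eta(X)\eta(Y)$. A distribution $\mathcal{V}$ is $\phi$-invariant if $\phi(\mathcal{V})\subseteq\mathcal{V}$. *)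

From HB Require Import structures.
From mathcomp Require Import all_boot all_order all_algebra.
From mathcomp Require Import all_classical all_reals all_analysis.
Set Implicit Arguments. Unset Strict Implicit. Unset Printing Implicit Defensive.
Import Order.TTheory GRing.Theory Num.Theory numFieldNormedType.Exports.
Local Open Scope ring_scope.
Local Open Scope classical_set_scope.

(* Model: the (tangent) bundle of M is a continuous rank-r subbundle of the
   trivial bundle M x R^N (Whitney embedding).  A subspace of R^N is encoded
   by a square matrix whose row space is that subspace; vectors are row
   vectors, (1,1)-tensors act on the right (v *m phi p), 1-forms are column
   vectors (eta(v) = (v *m eta p) 0 0), and metrics are Gram matrices. *)

Definition form1 {R : pzRingType} {N : nat} (e : 'cV[R]_N) (v : 'rV[R]_N) : R :=
  (v *m e) 0 0.

Definition form2 {R : pzRingType} {N : nat} (G : 'M[R]_N) (u v : 'rV[R]_N) : R :=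
  (u *m G *m v^T) 0 0.

Definition cont_subbundle {R : realType} {M : topologicalType} {N : nat}
    (k : nat) (E : M -> 'M[R]_N) : Prop :=
  forall p : M, exists (U : set M) (F : M -> 'M[R]_(k, N)),
    [/\ open U, U p, (forall q, U q -> {for q, continuous F}) &
        forall q, U q -> row_free (F q) /\ (F q == E q)%MS].

Definition almost_contact_metric {R : realType} {M : topologicalType} {N : nat}
    (T : M -> 'M[R]_N) (phi : M -> 'M[R]_N) (xi : M -> 'rV[R]_N)
    (eta : M -> 'cV[R]_N) (G : M -> 'M[R]_N) : Prop :=
  [/\ continuous phi, continuous xi, continuous eta & continuous G] /\
  (forall p, (xi p <= T p)%MS) /\
  (forall p (v : 'rV[R]_N), (v <= T p)%MS -> (v *m phi p <= T p)%MS) /\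
  (forall p u v, (u <= T p)%MS -> (v <= T p)%MS ->
     form2 (G p) u v = form2 (G p) v u) /\
  (forall p v, (v <= T p)%MS -> v != 0 -> 0 < form2 (G p) v v) /\
  (forall p v, (v <= T p)%MS ->
     v *m phi p *m phi p = - v + form1 (eta p) v *: xi p) /\
  (forall p, form1 (eta p) (xi p) = 1) /\
  (forall p u v, (u <= T p)%MS -> (v <= T p)%MS ->
     form2 (G p) (u *m phi p) (v *m phi p)
       = form2 (G p) u v - form1 (eta p) u * form1 (eta p) v).

Definition orth_compl {R : fieldType} {M : Type} {N : nat}
    (T V G : M -> 'M[R]_N) (p : M) (v : 'rV[R]_N) : Prop :=
  (v <= T p)%MS /\ forall w : 'rV[R]_N, (w <= V p)%MS -> form2 (G p) v w = 0.

From HB Require Import structures.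
From mathcomp Require Import all_boot all_order all_algebra.
From mathcomp Require Import all_classical all_reals all_analysis.
Import Order.TTheory GRing.Theory Num.Theory numFieldNormedType.Exports.
Local Open Scope ring_scope.
Local Open Scope classical_set_scope.

(* Let W be a phi-invariant subspace of a tangent space. If xi is not in W,
   then for w in W the vector phi^2 w + w = eta(w) xi lies in W, so eta
   vanishes on W and phi is a complex structure on W: dim W is even. If xi
   is in W, then (v, t) |-> (phi v - t xi, eta v) is a complex structure on
   W + R (as on M x R), so dim W is odd. In the other case eta = g(-, xi) vanishes on
   V, i.e. xi is orthogonal to V. The same identity eta = g(-, xi) shows that
   V^perp lies in ker eta when xi is in V. *)

Lemma sqr_mx_eqN1_even (R : realDomainType) (n : nat) (A : 'M[R]_n) :
  A *m A = (-1)%:M -> ~~ odd n.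
Proof.
move=> AA; have := congr1 determinant AA.
rewrite det_mulmx det_scalar -signr_odd.
case: (odd n) => //= detA2.
by have := sqr_ge0 (\det A); rewrite expr2 detA2 expr1 ler0N1.
Qed.

Lemma form2_0r (R : pzRingType) (N : nat) (G : 'M[R]_N) (u : 'rV[R]_N) :
  form2 G u 0 = 0.
Proof. by rewrite /form2 trmx0 mulmx0 mxE. Qed.

Lemma stablemx_rowP (R : fieldType) (n : nat) (W f : 'M[R]_n) :
  reflect (forall v : 'rV[R]_n, (v <= W)%MS -> (v *m f <= W)%MS) (stablemx W f).
Proof.
apply: (iffP idP) => [Wf v vW | Wf].
  by apply: submx_trans Wf; apply: submxMr.
by apply/row_subP => i; rewrite row_mul; apply/Wf/row_sub.
Qed.

Lemma cont_subbundle_rank {R : realType} {M : topologicalType} {N k : nat}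
    {E : M -> 'M[R]_N} :
  cont_subbundle k E -> forall p, \rank (E p) = k.
Proof.
move=> Ebundle p; have [U [F [_ Up _ /(_ p Up) [Ffree FE]]]] := Ebundle p.
by rewrite -(eqmx_rank FE); apply/eqP.
Qed.

Section AlmostContactPoint.

Context {R : realFieldType} {N : nat}.
Context {T phi G : 'M[R]_N} {xi : 'rV[R]_N} {eta : 'cV[R]_N}.

Hypothesis xi_sub : (xi <= T)%MS.
Hypothesis phi_sub : forall v : 'rV[R]_N, (v <= T)%MS -> (v *m phi <= T)%MS.
Hypothesis phi2 : forall v : 'rV[R]_N, (v <= T)%MS ->
  v *m phi *m phi = - v + form1 eta v *: xi.
Hypothesis eta_xi : form1 eta xi = 1.

Lemma xi_neq0 : xi != 0.
Proof.
apply: contra_eq_neq eta_xi => ->.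
by rewrite /form1 mul0mx mxE eq_sym oner_neq0.
Qed.

Lemma phi_xi : xi *m phi = 0.
Proof.
set y := xi *m phi.
have phi2_xi : y *m phi = 0 by rewrite phi2 // eta_xi scale1r addNr.
have y_xi : y = form1 eta y *: xi.
  have := phi2 _ (phi_sub _ xi_sub); rewrite -/y phi2_xi mul0mx => /eqP.
  by rewrite eq_sym addrC subr_eq0 => /eqP.
have : (form1 eta y * form1 eta y) *: xi = 0.
  by rewrite -scalerA -y_xi scalemxAl -y_xi phi2_xi.
move/eqP; rewrite scaler_eq0 (negbTE xi_neq0) orbF mulf_eq0 orbb => /eqP c0.
by rewrite y_xi c0 scale0r.
Qed.

Lemma eta_phi v : (v <= T)%MS -> form1 eta (v *m phi) = 0.
Proof.
move=> vT; have := phi2 _ (phi_sub _ vT).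
rewrite [v *m phi *m phi]phi2 // mulmxDl mulNmx -scalemxAl phi_xi scaler0 addr0.
rewrite -{1}[- (v *m phi)]addr0 => /addrI/esym/eqP; rewrite scaler_eq0.
by rewrite (negbTE xi_neq0) orbF => /eqP.
Qed.

Lemma mulmx_eta_eq0 k (F : 'M[R]_(k, N)) :
  (forall i, form1 eta (row i F) = 0) -> F *m eta = 0.
Proof.
move=> Feta; apply/row_matrixP => i.
rewrite row0 row_mul [row i F *m eta]mx11_scalar -/(form1 eta (row i F)).
by rewrite Feta raddf0.
Qed.

Lemma mx_phi2 k (F : 'M[R]_(k, N)) :
  (F <= T)%MS -> F *m phi *m phi = - F + F *m eta *m xi.
Proof.
move=> FT; apply/row_matrixP => i.
rewrite !row_mul linearD linearN /= !row_mul phi2; last first.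
  exact: submx_trans (row_sub i F) FT.
by rewrite [row i F *m eta]mx11_scalar mul_scalar_mx.
Qed.

Lemma mx_phi_eta k (F : 'M[R]_(k, N)) : (F <= T)%MS -> F *m phi *m eta = 0.
Proof.
move=> FT; apply: mulmx_eta_eq0 => i.
by rewrite row_mul eta_phi //; apply: submx_trans (row_sub i F) FT.
Qed.

Lemma eta_form2_xi :
    (forall u v, (u <= T)%MS -> (v <= T)%MS ->
       form2 G (u *m phi) (v *m phi)
         = form2 G u v - form1 eta u * form1 eta v) ->
  forall v, (v <= T)%MS -> form1 eta v = form2 G v xi.
Proof.
move=> compat v vT; have := compat _ _ vT xi_sub.
rewrite phi_xi form2_0r eta_xi mulr1 => /eqP.
by rewrite eq_sym subr_eq0 => /eqP.
Qed.

Section InvariantFrame.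

Context {k : nat} {F : 'M[R]_(k, N)}.
Hypotheses (F_free : row_free F) (F_sub : (F <= T)%MS).
Hypothesis F_stable : stablemx F phi.

Let J := F *m phi *m pinvmx F.

Let JF : J *m F = F *m phi.
Proof. exact: mulmxKpV. Qed.

Lemma frame_eta_eq0_even : F *m eta = 0 -> ~~ odd k.
Proof.
move=> Feta; apply: (@sqr_mx_eqN1_even _ _ J); apply: (row_free_inj F_free).
rewrite /= -mulmxA JF mulmxA JF mx_phi2 // Feta mul0mx addr0.
by rewrite mul_scalar_mx scaleN1r.
Qed.

Lemma frame_xi_odd : (xi <= F)%MS -> odd k.
Proof.
move=> xiF; set x := xi *m pinvmx F.
have xF : x *m F = xi by rewrite mulmxKpV.
set e := F *m eta.
(* In the basis (F, 1) of W + R, (a, t) |-> (a J - t x, a e) is the complex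
   structure (v, t) |-> (phi v - t xi, eta v). *)
have : block_mx J e (- x) 0 *m block_mx J e (- x) 0 = (-1)%:M.
  rewrite mulmx_block (scalar_mx_block k 1); congr block_mx.
  - apply: (row_free_inj F_free) => /=.
    rewrite mulmxDl -mulmxA JF mulmxA JF mx_phi2 // mulmxN mulNmx.
    by rewrite -[e *m x *m F]mulmxA xF addrK mul_scalar_mx scaleN1r.
  - by rewrite mulmx0 addr0 /e mulmxA JF mx_phi_eta.
  - apply: (row_free_inj F_free) => /=.
    by rewrite !mul0mx addr0 !mulNmx -mulmxA JF mulmxA xF phi_xi oppr0.
  - rewrite mulmx0 addr0 mulNmx /e mulmxA xF [xi *m eta]mx11_scalar.
    by rewrite -/(form1 eta xi) eta_xi raddfN.
by move/sqr_mx_eqN1_even; rewrite addn1 /=; case: (odd k).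
Qed.

End InvariantFrame.

Lemma stable_eta_eq0 (W : 'M[R]_N) :
  (W <= T)%MS -> stablemx W phi -> ~~ (xi <= W)%MS -> W *m eta = 0.
Proof.
move=> WT /stablemx_rowP phiW xi_notin_W; apply: mulmx_eta_eq0 => i.
set w := row i W; have wW : (w <= W)%MS := row_sub i W.
apply/eqP; apply: contraNT xi_notin_W => etaw.
have : ((w *m phi *m phi + w)%R <= W)%MS.
  exact: addmx_sub (phiW _ (phiW _ wW)) wW.
rewrite phi2; last exact: submx_trans WT.
rewrite addrC addNKr => /(scalemx_sub (form1 eta w)^-1).
by rewrite scalerA mulVf // scale1r.
Qed.

Lemma stable_xi_sub_odd_rank (W : 'M[R]_N) :
  (W <= T)%MS -> stablemx W phi -> (xi <= W)%MS = odd (\rank W).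
Proof.
move=> WT Wstable.
have baseT : (row_base W <= T)%MS by rewrite eq_row_base.
have base_stable : stablemx (row_base W) phi by rewrite stablemx_row_base.
have [xiW | xi_notin_W] := boolP (xi <= W)%MS.
  by apply/esym/(frame_xi_odd (row_base_free W) baseT base_stable);
     rewrite eq_row_base.
apply/esym/negbTE/(frame_eta_eq0_even (row_base_free W) baseT base_stable).
have /submxP[D ->] : (row_base W <= W)%MS by rewrite eq_row_base.
by rewrite -mulmxA stable_eta_eq0 ?mulmx0.
Qed.

End AlmostContactPoint.

Theorem lemma2p1 (R : realType) (M : topologicalType) (N r k : nat)
    (T : M -> 'M[R]_N) (phi : M -> 'M[R]_N) (xi : M -> 'rV[R]_N)
    (eta : M -> 'cV[R]_N) (G : M -> 'M[R]_N) (V : M -> 'M[R]_N) :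
  connected [set: M] ->
  cont_subbundle r T ->
  almost_contact_metric T phi xi eta G ->
  (* V is a distribution (continuous subbundle of T of constant rank k) *)
  cont_subbundle k V ->
  (forall p, (V p <= T p)%MS) ->
  (* V is phi-invariant *)
  (forall p (v : 'rV[R]_N), (v <= V p)%MS -> (v *m phi p <= V p)%MS) ->
  ((forall p, (xi p <= V p)%MS) \/ (forall p, orth_compl T V G p (xi p))) /\
  ((forall p, (xi p <= V p)%MS) ->
     forall p (v : 'rV[R]_N), orth_compl T V G p v -> form1 (eta p) v = 0).
Proof.
move=> _ _ [_ [xi_sub [phi_sub [g_sym [_ [phi2 [eta_xi compat]]]]]]].
move=> Vbundle VT Vinv.
have V_stable p : stablemx (V p) (phi p) by apply/stablemx_rowP/Vinv.
have xiV_odd p : (xi p <= V p)%MS = odd k.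
  by rewrite (stable_xi_sub_odd_rank (xi_sub p) (phi_sub p) (phi2 p) (eta_xi p))
    // (cont_subbundle_rank Vbundle).
have eta_g p :=
  eta_form2_xi (xi_sub p) (phi_sub p) (phi2 p) (eta_xi p) (compat p).
split=> [|xiV p v [vT v_orth]]; last by rewrite eta_g //; apply: v_orth.
have [k_odd | k_even] := boolP (odd k); [left => p | right => p].
  by rewrite xiV_odd.
split=> // w /[dup] wV /submxP[D w_def].
have wT : (w <= T p)%MS := submx_trans wV (VT p).
rewrite g_sym // -eta_g // /form1 w_def -mulmxA.
by rewrite (stable_eta_eq0 (phi2 p)) ?xiV_odd ?mulmx0 ?mxE.
Qed.
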